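(* Let $\Omega\subset\mathbb{R}^2$ be open and bounded with Lipschitz boundary, let $f\in L^\infty(\Omega)$, $\lambda_1,\lambda_2>0$, and let $$\mathcal{A}=\{u\in L^1(\Omega):\ \log u\in L^1(\Omega)\},\qquad \mathcal{B}=\{v\in L^2(\Omega):\ v\le f \text{ a.e.}\}.$$ Let $u\in BV(\Omega)\cap\mathcal{A}$. Then the minimisation problem $$\inf_{v\in L^2(\Omega)\cap\mathcal{B}}\Big\{\frac{\lambda_1}{2}\|v\|_{L^2(\Omega)}^2+\lambda_2\, D_{KL}(f-v,u)\Big\}$$ admits a minimiser, and this minimiser is unique.
   Context: For nonnegative $\varphi,\psi\in L^1(\Omega)$ the Kullback–Leibler functional is $D_{KL}(\varphi,\psi)=\int_\Omega\big(\psi-\varphi+\varphi\log(\varphi/\psi)\big)\,dx\in[0,+\infty]$, with the convention $0\log 0=0$. Note that $u\in\mathcal{A}$ forces $u\ge 0$ a.e. (so that $\log u$ is defined). $BV(\Omega)$ denotes the space of functions of bounded variation. *)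

From HB Require Import structures.
From mathcomp Require Import all_boot all_order all_algebra.
From mathcomp Require Import all_classical all_reals all_analysis.
Set Implicit Arguments. Unset Strict Implicit. Unset Printing Implicit Defensive.
Import Order.TTheory GRing.Theory Num.Theory.
Import numFieldNormedType.Exports.
Local Open Scope classical_set_scope.
Local Open Scope ring_scope.

Definition leb2 (R : realType) := ((@lebesgue_measure R) \x (@lebesgue_measure R))%E.
Arguments leb2 R : clear implicits.

Definition bounded2 (R : realType) (O : set (R * R)) : Prop :=
  exists M : R, forall x, O x -> `|x.1| <= M /\ `|x.2| <= M.

Definition lipschitz1 (R : realType) (g : R -> R) : Prop :=
  exists L : R, forall a b, `|g a - g b| <= L * `|a - b|.

Definition boundary2 (R : realType) (O : set (R * R)) : set (R * R) :=
  closure O `\` interior O.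

(** Lipschitz boundary: near each boundary point p, after a rotation of
   coordinates centred at p, O coincides (in a Euclidean ball around p) with
   the open region strictly above the graph of a Lipschitz function. *)
Definition lipschitz_boundary (R : realType) (O : set (R * R)) : Prop :=
  forall p, boundary2 O p ->
  exists (r theta : R) (g : R -> R), 0 < r /\ lipschitz1 g /\
    forall x : R * R, (x.1 - p.1) ^+ 2 + (x.2 - p.2) ^+ 2 < r ^+ 2 ->
      (O x <-> g (cos theta * (x.1 - p.1) + sin theta * (x.2 - p.2))
               < - sin theta * (x.1 - p.1) + cos theta * (x.2 - p.2)).

Definition L1 (R : realType) (O : set (R * R)) (h : R * R -> R) : Prop :=
  (leb2 R).-integrable O (EFin \o h).

Definition L2 (R : realType) (O : set (R * R)) (h : R * R -> R) : Prop :=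
  measurable_fun O h /\ (\int[leb2 R]_(x in O) ((h x) ^+ 2)%:E < +oo)%E.

Definition Linf (R : realType) (O : set (R * R)) (h : R * R -> R) : Prop :=
  measurable_fun O h /\
  exists M : R, {ae leb2 R, forall x, O x -> `|h x| <= M}.

Definition d1 (R : realType) (h : R * R -> R) (x : R * R) : R := 'D_((1 : R), (0 : R)) h x.
Definition d2 (R : realType) (h : R * R -> R) (x : R * R) : R := 'D_((0 : R), (1 : R)) h x.

Definition C1 (R : realType) (h : R * R -> R) : Prop :=
  (forall x, differentiable h x) /\ continuous (d1 h) /\ continuous (d2 h).

Definition test_field (R : realType) (O : set (R * R)) (p1 p2 : R * R -> R) : Prop :=
  C1 p1 /\ C1 p2 /\
  compact (closure [set x | p1 x != 0 \/ p2 x != 0]) /\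
  closure [set x | p1 x != 0 \/ p2 x != 0] `<=` O /\
  (forall x, p1 x ^+ 2 + p2 x ^+ 2 <= 1).

Definition BV (R : realType) (O : set (R * R)) (u : R * R -> R) : Prop :=
  L1 O u /\
  exists C : R, forall p1 p2, test_field O p1 p2 ->
    (\int[leb2 R]_(x in O) (u x * (d1 p1 x + d2 p2 x))%:E <= C%:E)%E.

(** The class A = { u in L^1 : log u in L^1 } (log u finite a.e. forces u > 0 a.e.). *)
Definition classA (R : realType) (O : set (R * R)) (u : R * R -> R) : Prop :=
  L1 O u /\ {ae leb2 R, forall x, O x -> 0 < u x} /\ L1 O (fun x => ln (u x)).

Definition classB (R : realType) (O : set (R * R)) (f v : R * R -> R) : Prop :=
  L2 O v /\ {ae leb2 R, forall x, O x -> v x <= f x}.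

Definition kl_integrand (R : realType) (phi psi : R * R -> R) (x : R * R) : \bar R :=
  if phi x == 0 then (psi x)%:E
  else if psi x == 0 then +oo%E
  else (psi x - phi x + phi x * ln (phi x / psi x))%:E.

Definition DKL (R : realType) (O : set (R * R)) (phi psi : R * R -> R) : \bar R :=
  (\int[leb2 R]_(x in O) kl_integrand phi psi x)%E.

Definition energy (R : realType) (O : set (R * R)) (f u : R * R -> R)
    (l1 l2 : R) (v : R * R -> R) : \bar R :=
  ((l1 / 2)%:E * (\int[leb2 R]_(x in O) ((v x) ^+ 2)%:E)
   + l2%:E * DKL O (fun x => (f x - v x)%R) u)%E.

From HB Require Import structures.
From mathcomp Require Import all_boot all_order all_algebra.
From mathcomp Require Import all_classical all_reals all_analysis.
From mathcomp Require Import ring lra measurable_realfun.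
Set Implicit Arguments. Unset Strict Implicit. Unset Printing Implicit Defensive.
Import Order.TTheory GRing.Theory Num.Theory.
Import numFieldNormedType.Exports.
Local Open Scope classical_set_scope.
Local Open Scope ring_scope.

(* For a.e. x the integrand of the energy is the function of w <= f x
     g(w) = l1/2 w^2 + l2 (u x - (f x - w) + (f x - w) ln ((f x - w) / u x)),
   whose derivative l1 w - l2 ln ((f x - w) / u x) increases from -oo to +oo on
   ]-oo, f x[.  Its zero vopt x minimises g, and the tangent inequality for the convex
   KL term gives g(w) >= g(vopt x) + l1/2 (w - vopt x)^2.  Integrating,
   E(w) >= E(vopt) + l1/2 ||w - vopt||^2 for every admissible w, which gives both
   minimality and uniqueness because E(vopt) is finite: g(vopt x) <= g(f x) <=
   l1/2 ||f||_oo^2 + l2 u x.  The minimiser is measurable since vopt x > a iff a < f x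
   and the derivative is negative at a. *)

Section pointwise_energy.
Context {R : realType}.

Definition kl_real (t U : R) : R := if t == 0 then U else U - t + t * ln (t / U).

Lemma kl_integrandE (phi psi : R * R -> R) x : psi x != 0 ->
  kl_integrand phi psi x = (kl_real (phi x) (psi x))%:E.
Proof. by move=> psi0; rewrite /kl_integrand /kl_real (negbTE psi0); case: ifP. Qed.

Lemma kl_real_tangent (U s t : R) : 0 < U -> 0 < s -> 0 <= t ->
  kl_real s U + ln (s / U) * (t - s) <= kl_real t U.
Proof.
move=> U0 s0 t0; rewrite /kl_real gt_eqF //.
have [->|tn0] := eqVneq t 0; first by nra.
have {tn0} t0 : 0 < t by rewrite lt_neqAle eq_sym tn0.
have lnE : ln (s / U) = ln (s / t) + ln (t / U).
  rewrite -lnM ?posrE ?divr_gt0 //; congr ln; field.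
  by rewrite !lt0r_neq0.
have : ln (s / t) <= s / t - 1.
  have := @le_ln1Dx R (s / t - 1); rewrite [1 + _]addrC subrK; apply.
  by rewrite ltrBrDl subrr divr_gt0.
rewrite -(ler_pM2l t0) mulrBr mulr1 mulrCA mulfV ?mulr1 ?lt0r_neq0 // lnE.
nra.
Qed.

Lemma kl_real_ge0 (U t : R) : 0 < U -> 0 <= t -> 0 <= kl_real t U.
Proof.
move=> U0 t0; have := kl_real_tangent U0 U0 t0.
by rewrite /kl_real gt_eqF // divff ?lt0r_neq0 // ln1 mul0r mulr0 subrr !add0r.
Qed.

Variables l1 l2 : R.
Hypotheses (l1_gt0 : 0 < l1) (l2_gt0 : 0 < l2).

Definition energy_pt (F U w : R) : R := l1 / 2 * w ^+ 2 + l2 * kl_real (F - w) U.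

(* The derivative of [energy_pt F U] on [w < F]. *)
Definition energy_slope (F U w : R) : R := l1 * w - l2 * ln ((F - w) / U).

Lemma energy_slope_lt (F U v w : R) : 0 < U -> v < w -> w < F ->
  energy_slope F U v < energy_slope F U w.
Proof.
move=> U0 vw wF; rewrite /energy_slope.
have ln_lt : ln ((F - w) / U) < ln ((F - v) / U).
  rewrite ltr_ln ?posrE ?divr_gt0 ?subr_gt0 ?(lt_trans vw) //.
  by rewrite ltr_pM2r ?invr_gt0 // ltrD2l ltrN2.
by rewrite ltrB // ?ltr_pM2l.
Qed.

Lemma continuous_energy_slope (F U w : R) : 0 < U -> w < F ->
  {for w, continuous (energy_slope F U)}.
Proof.
move=> U0 wF; apply: continuousB; first by apply: continuousM => //; exact: cst_continuous.
apply: continuousM; first exact: cst_continuous.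
apply: continuous_comp.
  by apply: continuousM; [apply: continuousB => //; exact: cst_continuous|exact: cst_continuous].
by apply: continuous_ln; rewrite divr_gt0 // subr_gt0.
Qed.

Lemma energy_slope_lt0_ex (F U : R) : 0 < U -> exists a, a < F /\ energy_slope F U a < 0.
Proof.
move=> U0; pose a := Num.min (F - U) 0 - 1.
have min_FU : Num.min (F - U) 0 <= F - U by rewrite ge_min lexx.
have min_0 : Num.min (F - U) 0 <= 0 by rewrite ge_min lexx orbT.
have aFU : a < F - U by rewrite /a; lra.
have a0 : a < 0 by rewrite /a; lra.
exists a; split; first by lra.
have : 0 < ln ((F - a) / U) by apply: ln_gt0; rewrite ltr_pdivlMr // mul1r; lra.
move/(mulr_gt0 l2_gt0); have := pmulr_rlt0 a l1_gt0; rewrite a0 /energy_slope; lra.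
Qed.

Lemma energy_slope_gt0_ex (F U : R) : 0 < U -> exists b, b < F /\ 0 < energy_slope F U b.
Proof.
move=> U0; pose c := l1 * (F - 1) / l2; pose e := Num.min 1 (U * expR c / 2).
have e0 : 0 < e by rewrite lt_min ltr01 /= !mulr_gt0 ?expR_gt0.
have e1 : e <= 1 by rewrite ge_min lexx.
exists (F - e); split; first by lra.
have eU : e / U < expR c.
  have : e <= U * expR c / 2 by rewrite ge_min lexx orbT.
  have := mulr_gt0 U0 (expR_gt0 c); rewrite ltr_pdivrMr //; lra.
have lnc : ln (e / U) < c by rewrite -ltr_expR lnK // posrE divr_gt0.
have l2c : l2 * c = l1 * (F - 1) by rewrite /c; field; exact: lt0r_neq0.
have : l1 * (F - 1) <= l1 * (F - e) by rewrite ler_pM2l // lerD2l lerN2.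
rewrite /energy_slope (_ : F - (F - e) = e); last by ring.
by rewrite -(ltr_pM2l l2_gt0) in lnc; lra.
Qed.

Lemma energy_slope_root_ex (F U : R) : 0 < U ->
  exists r, r < F /\ energy_slope F U r = 0.
Proof.
move=> U0; have [a [aF sa]] := energy_slope_lt0_ex F U0.
have [b [bF sb]] := energy_slope_gt0_ex F U0.
have ab : a <= b.
  by rewrite leNgt; apply/negP => /(energy_slope_lt U0)/(_ aF); lra.
have cont : {within `[a, b], continuous (energy_slope F U)}.
  apply: continuous_in_subspaceT => x; rewrite inE /= in_itv /= => /andP[_ xb].
  by apply: continuous_energy_slope U0 _; exact: le_lt_trans bF.
have bnd : Num.min (energy_slope F U a) (energy_slope F U b) <= 0 <=
    Num.max (energy_slope F U a) (energy_slope F U b).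
  by rewrite ge_min le_max (ltW sa) (ltW sb) orbT.
have [r] := IVT ab cont bnd.
by rewrite in_itv /= => /andP[_ rb] sr; exists r; split => //; exact: le_lt_trans bF.
Qed.

Definition argmin_pt (F U : R) : R := xget F [set r | r < F /\ energy_slope F U r = 0].

Lemma argmin_ptP (F U : R) : 0 < U ->
  argmin_pt F U < F /\ energy_slope F U (argmin_pt F U) = 0.
Proof. by move=> U0; apply: (xgetPex F (energy_slope_root_ex F U0)). Qed.

Lemma lt_argmin_pt (F U a : R) : 0 < U -> a < F ->
  (a < argmin_pt F U) = (energy_slope F U a < 0).
Proof.
move=> U0 aF; have [rF sr] := argmin_ptP F U0.
apply/idP/idP => [ar|sa]; first by rewrite -sr energy_slope_lt.
rewrite ltNge le_eqVlt negb_or; apply/andP; split.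
  by apply: contraTneq sa => <-; rewrite sr ltxx.
by apply/negP => /(energy_slope_lt U0)/(_ aF); lra.
Qed.

Lemma energy_pt_strong_min (F U w : R) : 0 < U -> w <= F ->
  energy_pt F U (argmin_pt F U) + l1 / 2 * (w - argmin_pt F U) ^+ 2 <= energy_pt F U w.
Proof.
move=> U0 wF; have [rF] := argmin_ptP F U0; set r := argmin_pt F U.
rewrite /energy_slope; set L := ln ((F - r) / U) => sr.
have s0 : 0 < F - r by rewrite subr_gt0.
have t0 : 0 <= F - w by rewrite subr_ge0.
have : l2 * kl_real (F - r) U + l1 * r * (r - w) <= l2 * kl_real (F - w) U.
  rewrite (_ : l1 * r = l2 * L); last by lra.
  rewrite -mulrA -mulrDr ler_pM2l // (_ : r - w = F - w - (F - r)); last by ring.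
  exact: kl_real_tangent.
rewrite /energy_pt; nra.
Qed.

Lemma energy_pt_argmin_le (F U : R) : 0 < U ->
  energy_pt F U (argmin_pt F U) <= l1 / 2 * F ^+ 2 + l2 * U.
Proof.
move=> U0; have := energy_pt_strong_min U0 (lexx F).
rewrite /energy_pt subrr /kl_real eqxx.
have : 0 <= l1 / 2 * (F - argmin_pt F U) ^+ 2 by rewrite mulr_ge0 ?sqr_ge0 ?divr_ge0 ?ltW.
lra.
Qed.

End pointwise_energy.

Section integral_lemmas.
Context d (T : measurableType d) (R : realType) (mu : {measure set T -> \bar R}).
Local Open Scope ereal_scope.

Lemma measurable_negligible_integral (D N : set T) (f : T -> \bar R) :
  measurable N -> measurable D -> measurable_fun D f -> mu N = 0 ->
  \int[mu]_(x in D) f x = \int[mu]_(x in D `\` N) f x.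
Proof.
move=> mN mD mf N0; rewrite integralE [RHS]integralE.
rewrite (ge0_negligible_integral mN mD (measurable_funepos mf)) //.
by rewrite (ge0_negligible_integral mN mD (measurable_funeneg mf)).
Qed.

Lemma integrable_cst_lty (D : set T) (k : R) : measurable D -> mu D < +oo ->
  mu.-integrable D (cst k%:E).
Proof.
move=> mD muD; apply/integrableP; split; first exact: measurable_cst.
by rewrite (integral_cst _ mD) lte_mul_pinfty.
Qed.

Lemma le_affine_integrable (D : set T) (g : T -> \bar R) (u : T -> R) (a b : R) :
  measurable D -> mu D < +oo -> mu.-integrable D (EFin \o u) -> measurable_fun D g ->
  (forall x, D x -> 0 <= g x <= (a + b * u x)%:E) -> mu.-integrable D g.
Proof.
move=> mD muD iu mg gb.
have := integrableD mD (integrable_cst_lty a mD muD) (integrableZl mD b iu).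
apply: le_integrable => // x Dx. have /andP[g0 gab] := gb x Dx.
by rewrite gee0_abs //= (le_trans gab) // lee_fin ler_norm.
Qed.

End integral_lemmas.

Lemma measurable_inv (R : realType) : measurable_fun [set: R] (@GRing.inv R).
Proof.
have -> : GRing.inv = fun x : R => if x == 0 then 0 else x^-1.
  by apply/funext => x; case: eqP => // ->; rewrite invr0.
apply: measurable_fun_if => //.
  by apply: measurable_fun_eqr => //; exact: measurable_cst.
rewrite setTI (_ : _ @^-1` _ = [set x : R | x != 0]); last first.
  by apply/seteqP; split => x /=; [move/negbT|move/negbTE].
apply: open_continuous_measurable_fun; first exact: open_neq.
by move=> x; rewrite inE => x0; apply: inv_continuous.
Qed.

Lemma open_measurable2 (R : realType) (O : set (R * R)) : open O -> measurable O.
Proof.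
move=> oO; pose box (q : rat * rat * rat) : set (R * R) :=
  ball (ratr q.1.1 : R) (ratr q.2) `*` ball (ratr q.1.2 : R) (ratr q.2).
have -> : O = \bigcup_(q in [set q | box q `<=` O]) box q.
  apply/seteqP; split => [x Ox|x [q /= qO /qO //]].
  have /nbhs_ballP[r r0 xrO] : nbhs x O by exact: open_nbhs_nbhs.
  have [e] : exists e : rat, ratr e \in `]0, r / 2[ by apply: rat_in_itvoo; rewrite divr_gt0.
  rewrite in_itv /= => /andP[e0 er].
  have near_rat (y : R) : exists q : rat, ball y (ratr e : R) (ratr q).
    have [q] : exists q : rat, ratr q \in `]y - ratr e, y + ratr e[.
      by apply: rat_in_itvoo; lra.
    by rewrite in_itv /= => yq; exists q; rewrite /ball /= ltr_distlC.
  have [[q1 xq1] [q2 xq2]] := (near_rat x.1, near_rat x.2).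
  exists (q1, q2, e); last by split; apply: ball_sym.
  move=> y [/= yq1 yq2]; have e2r : ratr e + ratr e <= r by lra.
  by apply: xrO; split; apply: (le_ball e2r); [exact: ball_triangle xq1 yq1|exact: ball_triangle xq2 yq2].
rewrite bigcup_mkcond; apply: countable_bigcupT_measurable; first exact: countableP.
move=> q; case: ifP => _ //; apply: measurableX; exact: measurable_ball.
Qed.

Lemma bounded2_leb2_lty (R : realType) (O : set (R * R)) :
  measurable O -> bounded2 O -> (leb2 R O < +oo)%E.
Proof.
move=> mO [M OM]; pose I : set R := [set` `[- M, M]].
have mI : measurable I by exact: measurable_itv.
apply: (@le_lt_trans _ _ (leb2 R (I `*` I))).
  apply: le_measure; rewrite ?inE //; first exact: measurableX.
  by move=> x /OM[x1 x2]; split; rewrite /I /= in_itv /= -ler_norml.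
have lI : (lebesgue_measure I < +oo)%E.
  by rewrite /I lebesgue_measure_itv; case: ifPn => _; rewrite ?ltry.
by rewrite /leb2 product_measure1E //; apply: lte_mul_pinfty; rewrite ?ge0_fin_numE.
Qed.

Lemma measurable_kl_integrand (R : realType) (D : set (R * R)) (phi psi : R * R -> R) :
  measurable D -> measurable_fun D phi -> measurable_fun D psi ->
  measurable_fun D (kl_integrand phi psi).
Proof.
move=> mD mphi mpsi.
have mphi0 : measurable_fun D (fun x => phi x == 0).
  by apply: measurable_fun_eqr => //; exact: measurable_cst.
apply: measurable_fun_if => //.
  by apply: measurableT_comp => //; apply: measurable_funS mpsi => //; exact: subIsetl.
have sub : D `&` (fun x => phi x == 0) @^-1` [set false] `<=` D by exact: subIsetl.
apply: measurable_fun_if => //; first exact: mphi0.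
  apply: measurable_fun_eqr; last exact: measurable_cst.
  exact: measurable_funS mD sub mpsi.
have {}sub : D `&` (fun x => phi x == 0) @^-1` [set false] `&`
    (fun x => psi x == 0) @^-1` [set false] `<=` D by move=> x [[]].
have [{}mphi {}mpsi] := (measurable_funS mD sub mphi, measurable_funS mD sub mpsi).
apply/measurable_EFinP; apply: measurable_funD; first exact: measurable_funB.
apply: measurable_funM => //; apply: (measurableT_comp (@measurable_ln R)).
by apply: measurable_funM => //; exact: (measurableT_comp (@measurable_inv R)).
Qed.

Section pointwise_minimiser.
Variables (R : realType) (O : set (R * R)) (f u : R * R -> R) (l1 l2 M : R).
Local Notation mu := (leb2 R).
Local Notation E := (energy O f u l1 l2).
Hypotheses (mO : measurable O) (muO : (mu O < +oo)%E) (mf : measurable_fun O f)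
  (iu : mu.-integrable O (EFin \o u)) (l1_gt0 : 0 < l1) (l2_gt0 : 0 < l2)
  (u_gt0 : {ae mu, forall x, O x -> 0 < u x})
  (f_le : {ae mu, forall x, O x -> `|f x| <= M}).

Let measurable_u : measurable_fun O u.
Proof. by apply/measurable_EFinP; exact: measurable_int _ iu. Qed.

Let half_l1_gt0 : 0 < l1 / 2.
Proof. by rewrite divr_gt0. Qed.

(* Off the null set where [u x <= 0] any value [<= f x] would do. *)
Definition vopt (x : R * R) : R :=
  if 0 < u x then argmin_pt l1 l2 (f x) (u x) else f x.

Lemma vopt_le x : vopt x <= f x.
Proof.
rewrite /vopt; case: ifPn => // u0.
exact/ltW/(argmin_ptP l1_gt0 l2_gt0 _ u0).1.
Qed.

Lemma measurable_vopt : measurable_fun O vopt.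
Proof.
apply: (measurability _ (RGenOInfty.measurableE R)) => //.
move=> /= _ [_ [a ->] <-].
pose b x := ((0 < u x) && (a < f x) && (energy_slope l1 l2 (f x) (u x) a < 0))
   || (~~ (0 < u x) && (a < f x)).
have -> : O `&` vopt @^-1` `]a, +oo[ = O `&` b @^-1` [set true].
  apply/seteqP; split => x [Ox]; rewrite /= ?in_itv /= ?andbT /vopt /b.
  - case: ifPn => u0 /= ax; split => //; rewrite ?ax //.
    have aF : a < f x := lt_le_trans ax (ltW (argmin_ptP l1_gt0 l2_gt0 _ u0).1).
    by rewrite aF -(lt_argmin_pt l1_gt0 l2_gt0 u0 aF) ax.
  - case: ifPn => u0 /=; last by split.
    by rewrite orbF => /andP[aF sa]; split => //; rewrite (lt_argmin_pt l1_gt0 l2_gt0 u0 aF).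
suff : measurable_fun O b by exact.
have mu0 : measurable_fun O (fun x => 0 < u x).
  exact: measurable_fun_ltr (measurable_cst _) measurable_u.
have maf : measurable_fun O (fun x => a < f x).
  exact: measurable_fun_ltr (measurable_cst _) mf.
apply: measurable_or; last exact: measurable_and (measurable_neg mu0) maf.
apply: measurable_and; first exact: measurable_and mu0 maf.
apply: measurable_fun_ltr (measurable_cst _); apply: measurable_funB => //.
apply: measurable_funM => //; apply: (measurableT_comp (@measurable_ln R)).
apply: measurable_funM; first exact: measurable_funB.
exact: (measurableT_comp (@measurable_inv R)).
Qed.

Definition energy_density (w : R * R -> R) (x : R * R) : \bar R :=
  ((l1 / 2 * w x ^+ 2)%:E + l2%:E * kl_integrand (fun y => (f y - w y)%R) u x)%E.

Lemma energy_densityE w x : 0 < u x ->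
  energy_density w x = (energy_pt l1 l2 (f x) (u x) (w x))%:E.
Proof. by move=> u0; rewrite /energy_density kl_integrandE ?lt0r_neq0. Qed.

Lemma measurable_energy_density w : measurable_fun O w ->
  measurable_fun O (energy_density w).
Proof.
move=> mw; apply: emeasurable_funD.
  by apply/measurable_EFinP; apply: measurable_funM => //; exact: measurable_funX.
by apply: measurable_funeM; apply: measurable_kl_integrand => //; exact: measurable_funB.
Qed.

Lemma energy_density_ge0 w x : 0 < u x -> w x <= f x -> (0 <= energy_density w x)%E.
Proof.
move=> u0 wf; rewrite energy_densityE // lee_fin /energy_pt.
apply: addr_ge0; first by rewrite mulr_ge0 ?sqr_ge0 // ltW.
by rewrite mulr_ge0 ?kl_real_ge0 ?subr_ge0 // ltW.
Qed.

Lemma energy_density_strong_min w x : 0 < u x -> w x <= f x ->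
  (energy_density vopt x + (l1 / 2 * (w x - vopt x) ^+ 2)%:E <= energy_density w x)%E.
Proof.
move=> u0 wf; rewrite !energy_densityE // -EFinD lee_fin /vopt u0.
exact: energy_pt_strong_min.
Qed.

Lemma energy_density_vopt_le x : 0 < u x -> `|f x| <= M ->
  (energy_density vopt x <= (l1 / 2 * M ^+ 2 + l2 * u x)%:E)%E.
Proof.
move=> u0 fM; rewrite energy_densityE // lee_fin /vopt u0.
apply: le_trans (energy_pt_argmin_le l1_gt0 l2_gt0 _ u0) _.
rewrite lerD2r ler_pM2l //.
by move: fM; rewrite ler_norml => /andP[? ?]; nra.
Qed.

Lemma sqr_vopt_le x : 0 < u x -> `|f x| <= M -> vopt x ^+ 2 <= M ^+ 2 + 2 * l2 / l1 * u x.
Proof.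
move=> u0 fM; have := energy_density_vopt_le u0 fM.
rewrite energy_densityE // lee_fin /energy_pt => bound.
have kl0 : 0 <= l2 * kl_real (f x - vopt x) (u x).
  by rewrite mulr_ge0 ?kl_real_ge0 ?subr_ge0 ?vopt_le // ltW.
rewrite -(ler_pM2l half_l1_gt0).
have -> : l1 / 2 * (M ^+ 2 + 2 * l2 / l1 * u x) = l1 / 2 * M ^+ 2 + l2 * u x.
  by field; exact: lt0r_neq0.
lra.
Qed.

Lemma exceptional_null_set w : {ae mu, forall x, O x -> w x <= f x} ->
  exists N, [/\ measurable N, mu N = 0%E &
    forall x, (O `\` N) x -> [/\ 0 < u x, w x <= f x & `|f x| <= M]].
Proof.
move=> wf; have : {ae mu, forall x, O x -> [/\ 0 < u x, w x <= f x & `|f x| <= M]}.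
  apply: (filterS3 (ae_filter_ringOfSetsType mu) _ u_gt0 wf f_le).
  by move=> x ux wx fx Ox; split; [exact: ux|exact: wx|exact: fx].
case=> N [mN N0 ON]; exists N; split => // x [Ox Nx].
by apply: contrapT => nP; apply: Nx; apply: ON => /= P; apply: nP; exact: P Ox.
Qed.

Lemma energy_setD_null (w : R * R -> R) (N : set (R * R)) :
  measurable N -> mu N = 0%E -> measurable_fun O w ->
  (forall x, (O `\` N) x -> 0 < u x /\ w x <= f x) ->
  E w = (\int[mu]_(x in O `\` N) energy_density w x)%E.
Proof.
move=> mN N0 mw good; have mON : measurable (O `\` N) by exact: measurableD.
have sub : O `\` N `<=` O by move=> x [].
have mw2 : measurable_fun O (fun x => (w x ^+ 2)%:E).
  by apply/measurable_EFinP; exact: measurable_funX.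
have mkl : measurable_fun O (kl_integrand (fun y => f y - w y) u).
  by apply: measurable_kl_integrand => //; exact: measurable_funB.
rewrite /energy /DKL (measurable_negligible_integral (mu := mu) mN mO mw2 N0).
rewrite (measurable_negligible_integral (mu := mu) mN mO mkl N0) /energy_density.
rewrite ge0_integralD //; last 4 first.
- by move=> x _; rewrite lee_fin mulr_ge0 ?sqr_ge0 // ltW.
- apply/measurable_EFinP; apply: measurable_funM => //.
  exact: measurable_funX (measurable_funS mO sub mw).
- move=> x /good[u0 wf].
  by rewrite kl_integrandE ?lt0r_neq0 // mule_ge0 // lee_fin ?kl_real_ge0 ?subr_ge0 // ltW.
- exact: measurable_funeM (measurable_funS mO sub mkl).
under [X in (_ = X + _)%E]eq_integral do rewrite EFinM.
rewrite !ge0_integralZl ?lee_fin ?divr_ge0 ?ltW //.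
- exact: measurable_funS mO sub mkl.
- by move=> x /good[u0 wf]; rewrite kl_integrandE ?lt0r_neq0 // lee_fin kl_real_ge0 // subr_ge0.
- exact: measurable_funS mO sub mw2.
- by move=> x _; rewrite lee_fin sqr_ge0.
Qed.

Lemma le_affine_integrable_setD (g : R * R -> \bar R) (N : set (R * R)) (a b : R) :
  measurable N -> measurable_fun O g ->
  (forall x, (O `\` N) x -> (0 <= g x <= (a + b * u x)%:E)%E) ->
  mu.-integrable (O `\` N) g.
Proof.
move=> mN mg gb; have sub : O `\` N `<=` O by move=> x [].
have mON : measurable (O `\` N) by exact: measurableD.
apply: (le_affine_integrable (mu := mu) mON _ _ (measurable_funS mO sub mg) gb).
- by apply: le_lt_trans muO; apply: le_measure; rewrite ?inE.
- exact: (integrableS (mu := mu) mO mON sub iu).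
Qed.

Lemma classB_vopt : classB O f vopt.
Proof.
have vf : {ae mu, forall x, O x -> vopt x <= f x} by apply: aeW => x _; exact: vopt_le.
split=> //; split; first exact: measurable_vopt.
have [N [mN N0 good]] := exceptional_null_set vf.
have mv2 : measurable_fun O (fun x => (vopt x ^+ 2)%:E).
  by apply/measurable_EFinP; exact: measurable_funX measurable_vopt.
rewrite (ge0_negligible_integral mN mO mv2 _ N0) => [|x _]; last by rewrite lee_fin sqr_ge0.
apply: (integrable_lty (mu := mu) (measurableD mO mN)).
apply: (le_affine_integrable_setD (a := M ^+ 2) (b := 2 * l2 / l1) mN mv2).
by move=> x /good[u0 _ fM]; rewrite !lee_fin sqr_ge0 sqr_vopt_le.
Qed.

Lemma measurable_sqr_sub_vopt (w : R * R -> R) : measurable_fun O w ->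
  measurable_fun O (fun x => (l1 / 2 * (w x - vopt x) ^+ 2)%:E).
Proof.
move=> mw; apply/measurable_EFinP; apply: measurable_funM => //.
by apply: measurable_funX; apply: measurable_funB => //; exact: measurable_vopt.
Qed.

Lemma energy_vopt_gap w : classB O f w -> exists N, [/\ measurable N, mu N = 0%E &
  (E vopt + \int[mu]_(x in O `\` N) (l1 / 2 * (w x - vopt x) ^+ 2)%:E <= E w)%E].
Proof.
move=> [[mw _] wf]; have [N [mN N0 good]] := exceptional_null_set wf.
have mON : measurable (O `\` N) by exact: measurableD.
have sub : O `\` N `<=` O by move=> x [].
exists N; split => //.
have goodw x : (O `\` N) x -> 0 < u x /\ w x <= f x by case/good.
have goodv x : (O `\` N) x -> 0 < u x /\ vopt x <= f x by case/good => u0 _ _; rewrite vopt_le.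
rewrite (energy_setD_null mN N0 mw goodw) (energy_setD_null mN N0 measurable_vopt goodv).
have mdv := measurable_funS mO sub (measurable_energy_density measurable_vopt).
have mdw := measurable_funS mO sub (measurable_energy_density mw).
have mQ := measurable_funS mO sub (measurable_sqr_sub_vopt mw).
have Q0 x : (O `\` N) x -> (0 <= (l1 / 2 * (w x - vopt x) ^+ 2)%:E)%E.
  by move=> _; rewrite lee_fin mulr_ge0 ?sqr_ge0 // ltW.
have dv0 x : (O `\` N) x -> (0 <= energy_density vopt x)%E.
  by case/good => u0 _ _; rewrite energy_density_ge0 ?vopt_le.
rewrite -ge0_integralD //; apply: ge0_le_integral => //.
- by move=> x Dx; rewrite adde_ge0 ?dv0 ?Q0.
- exact: emeasurable_funD.
- by move=> x /good[u0 wx _]; exact: energy_density_strong_min.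
Qed.

Lemma energy_vopt_fin_num : E vopt \is a fin_num.
Proof.
have [N [mN N0 good]] := exceptional_null_set classB_vopt.2.
rewrite (energy_setD_null mN N0 measurable_vopt) => [|x /good[]//].
apply: (integrable_fin_num (mu := mu) (measurableD mO mN)).
apply: (le_affine_integrable_setD (a := l1 / 2 * M ^+ 2) (b := l2) mN).
  exact: measurable_energy_density measurable_vopt.
by move=> x /good[u0 _ fM]; rewrite energy_density_ge0 ?vopt_le ?energy_density_vopt_le.
Qed.

Lemma energy_vopt_le w : classB O f w -> (E vopt <= E w)%E.
Proof.
move=> /energy_vopt_gap[N [_ _]]; apply: le_trans; rewrite leeDl //.
by apply: integral_ge0 => x _; rewrite lee_fin mulr_ge0 ?sqr_ge0 // ltW.
Qed.

Lemma energy_minimiser_ae_eq w : classB O f w ->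
  (forall w', classB O f w' -> (E w <= E w')%E) -> {ae mu, forall x, O x -> w x = vopt x}.
Proof.
move=> wB wmin; have [N [mN N0 gap]] := energy_vopt_gap wB.
have mON : measurable (O `\` N) by exact: measurableD.
pose Q x := (l1 / 2 * (w x - vopt x) ^+ 2)%:E.
have Q0 x : (0 <= Q x)%E by rewrite lee_fin mulr_ge0 ?sqr_ge0 // ltW.
have intQ0 : (\int[mu]_(x in O `\` N) Q x = 0)%E.
  apply/le_anti; rewrite integral_ge0 // andbT.
  have := le_trans gap (wmin _ classB_vopt).
  by rewrite -[X in (_ <= X)%E]adde0 leeD2lE // energy_vopt_fin_num.
have mQ : measurable_fun (O `\` N) Q.
  by apply: measurable_funS (measurable_sqr_sub_vopt wB.1.1) => // x [].
have /(ae_eq_integral_abs mu mON mQ) aeQ : (\int[mu]_(x in O `\` N) `|Q x| = 0)%E.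
  by rewrite -intQ0; apply: eq_integral => x _; rewrite gee0_abs.
have notN : {ae mu, forall x, ~ N x} by exists N; split => // x /= /contrapT.
apply: filterS2 aeQ notN => x Qx Nx Ox.
move: (Qx (conj Ox Nx)) => /eqP.
by rewrite /Q eqe mulf_eq0 gt_eqF //= sqrf_eq0 subr_eq0 => /eqP.
Qed.

End pointwise_minimiser.

Theorem proposition2p2 (R : realType) (O : set (R * R)) (f u : R * R -> R)
    (l1 l2 : R) :
  open O -> bounded2 O -> lipschitz_boundary O ->
  Linf O f -> 0 < l1 -> 0 < l2 ->
  BV O u -> classA O u ->
  exists v : R * R -> R,
    classB O f v /\
    (forall w, classB O f w -> (energy O f u l1 l2 v <= energy O f u l1 l2 w)%E) /\
    (forall w, classB O f w ->
       (forall w', classB O f w' -> (energy O f u l1 l2 w <= energy O f u l1 l2 w')%E) ->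
       {ae leb2 R, forall x, O x -> w x = v x}).
Proof.
move=> oO bO _ [mf [M f_le]] l1_gt0 l2_gt0 _ [iu [u_gt0 _]].
have mO := open_measurable2 oO.
have muO := bounded2_leb2_lty mO bO.
exists (vopt f u l1 l2); split; first exact: classB_vopt mO muO mf iu l1_gt0 l2_gt0 u_gt0 f_le.
split; first exact: energy_vopt_le mO mf iu l1_gt0 l2_gt0 u_gt0 f_le.
exact: energy_minimiser_ae_eq mO muO mf iu l1_gt0 l2_gt0 u_gt0 f_le.
Qed.
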